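(* Let $n\geq 0$ be an integer, $r\in\mathbf{N}$ (so $r\geq 1$) and $k\in\mathbf{Z}$. Then \begin{align*} \tilde{A}_{n}^{(r,k)}(x)=\sum_{j=0}^{n}\Bigg\{\sum_{l=0}^{n-j}\sum_{a=0}^{n-j-l}\sum_{a_{1}+\cdots+a_{r}=a}\binom{n}{l+j}\binom{n-j-l}{a}\binom{a}{a_{1},\ldots,a_{r}} S_{1}(l+j,j)\left(\prod_{i=1}^{r}B_{a_{i}}^{(a_{i})}\right)\tilde{C}_{n-j-l-a}^{(k)}\Bigg\}x^{j}, \end{align*} where the inner sum runs over all $r$-tuples of nonnegative integers $(a_1,\ldots,a_r)$ with sum $a$.
   Context: For $k\in\mathbf{Z}$, $Lif_{k}(x)=\sum_{m=0}^{\infty}\frac{x^{m}}{m!(m+1)^{k}}$. For integers $r\geq 0$, $k\in\mathbf{Z}$, the polynomials $\tilde{A}_{n}^{(r,k)}(x)$ are defined by \[\left(\frac{t}{(1+t)\log(1+t)}\right)^{r}Lif_{k}\left(-\log(1+t)\right)(1+t)^{x}=\sum_{n=0}^{\infty}\tilde{A}_{n}^{(r,k)}(x)\frac{t^{n}}{n!}.\] The poly-Cauchy numbers of the second kind $\tilde{C}_{n}^{(k)}$ are defined by $Lif_{k}\left(-\log(1+t)\right)=\sum_{n=0}^{\infty}\tilde{C}_{n}^{(k)}\frac{t^{n}}{n!}$. For an integer $\alpha\geq 0$, the Bernoulli numbers of order $\alpha$ are defined by $\left(\frac{t}{e^{t}-1}\right)^{\alpha}=\sum_{n=0}^{\infty}B_{n}^{(\alpha)}\frac{t^{n}}{n!}$.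 $S_{1}(n,m)$ denotes the signed Stirling numbers of the first kind, defined by $x(x-1)\cdots(x-n+1)=\sum_{m=0}^{n}S_{1}(n,m)x^{m}$; $\binom{a}{a_1,\ldots,a_r}$ is the multinomial coefficient. *)

From mathcomp Require Import all_boot all_order all_algebra.
Set Implicit Arguments. Unset Strict Implicit. Unset Printing Implicit Defensive.
Import Order.TTheory GRing.Theory Num.Theory.
Local Open Scope ring_scope.

Section FPS.
Variable R : numFieldType.

Definition fps := nat -> R.

Definition fmul (f g : fps) : fps := fun n => \sum_(i < n.+1) f i * g (n - i)%N.
Definition fone : fps := fun n => (n == 0%N)%:R.
Definition fpow (f : fps) (m : nat) : fps := iter m (fmul f) fone.
(* composition f(g(t)), meaningful when g 0 = 0 *)
Definition fcomp (f g : fps) : fps :=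
  fun n => \sum_(m < n.+1) f m * fpow g m n.

Definition fexp : fps := fun n => (n`!%:R)^-1.
Definition flog1p : fps :=
  fun n => if n is 0 then 0 else (-1) ^+ n.-1 / n%:R.
Definition fgeom : fps := fun _ => 1.
(* multiplicative inverse of g, valid when g 0 = 1: 1/g = 1/(1-(1-g)) *)
Definition finv (g : fps) : fps := fcomp fgeom (fun n => fone n - g n).
Definition fshift (f : fps) : fps := fun n => f n.+1.
Definition fonept : fps := fun n => (n <= 1)%N%:R.
Definition fpow1p (x : R) : fps := fcomp fexp (fun n => x * flog1p n).

Definition fLif (k : int) : fps := fun m => (m`!%:R * (m.+1%:R) ^ k)^-1.
Definition fLifmlog (k : int) : fps := fcomp (fLif k) (fun n => - flog1p n).

Definition tC (k : int) (n : nat) : R := n`!%:R * fLifmlog k n.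

(* Bernoulli numbers of order alpha: (t/(e^t-1))^alpha *)
Definition fexpm1_over_t : fps := fun n => (n.+1`!%:R)^-1.
Definition bern (alpha n : nat) : R :=
  n`!%:R * fpow (finv fexpm1_over_t) alpha n.

Definition fbase : fps := finv (fmul fonept (fshift flog1p)).

Definition tA (n r : nat) (k : int) (x : R) : R :=
  n`!%:R * fmul (fmul (fpow fbase r) (fLifmlog k)) (fpow1p x) n.

Definition multinom (r a : nat) (s : 'I_r -> nat) : R :=
  a`!%:R / \prod_(i < r) (s i)`!%:R.

End FPS.

Definition S1 (n m : nat) : int := (\prod_(i < n) ('X - (i%:R)%:P))`_m.

From Pilot Require Import Defs.
From HB Require Import structures.
From mathcomp Require Import all_boot all_order all_algebra.
From mathcomp Require Import boolp.
From mathcomp Require Import ring zify.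
Set Implicit Arguments. Unset Strict Implicit. Unset Printing Implicit Defensive.
Import Order.TTheory GRing.Theory Num.Theory.
Local Open Scope ring_scope.

(* The series defining tA is a product of fbase^r, Lif_k(-log(1+t)) and
   (1+t)^x, so tA is a convolution of their coefficients.  The coefficient of
   t^m in (1+t)^x is the falling factorial (x)_m / m!, which expands into
   Stirling numbers; the coefficient of t^a in fbase^r is a sum over
   compositions of a into r parts of products of coefficients of fbase.  The
   remaining ingredient is [t^a] fbase = B_a^(a) / a!: substituting
   t = e^s - 1, whose compositional inverse is log(1+t), Lagrange inversion
   turns [t^a] fbase into [s^a] (s/(e^s-1))^a. *)

Lemma natS_neq0 (R : numDomainType) n : (n.+1%:R : R) != 0.
Proof. by rewrite pnatr_eq0. Qed.

Lemma natr_fact_neq0 (R : numDomainType) n : (n`!%:R : R) != 0.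
Proof. by rewrite pnatr_eq0 -lt0n fact_gt0. Qed.

Section PowerSeriesRing.
Variable R : numFieldType.
Local Notation ps := (fps R).
Implicit Types (f g h : ps) (p q : {poly R}).

HB.instance Definition _ := gen_eqMixin ps.
HB.instance Definition _ := gen_choiceMixin ps.

Lemma fpsP f g : (forall n, f n = g n) -> f = g.
Proof. exact: funext. Qed.

Definition fadd f g : ps := fun n => f n + g n.
Definition fopp f : ps := fun n => - f n.
Definition fzero : ps := fun _ => 0.

Lemma faddA : associative fadd.
Proof. by move=> f g h; apply: fpsP => n; rewrite /fadd addrA. Qed.
Lemma faddC : commutative fadd.
Proof. by move=> f g; apply: fpsP => n; rewrite /fadd addrC. Qed.
Lemma fadd0 : left_id fzero fadd.
Proof. by move=> f; apply: fpsP => n; rewrite /fadd /fzero add0r. Qed.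
Lemma faddN : left_inverse fzero fopp fadd.
Proof. by move=> f; apply: fpsP => n; rewrite /fadd /fzero /fopp addNr. Qed.
HB.instance Definition _ := GRing.isZmodule.Build ps faddA faddC fadd0 faddN.

(* Identities between power series are reduced to polynomial identities
   between their truncations. *)
Definition agree N f p := forall i, (i <= N)%N -> f i = p`_i.
Definition trunc N f : {poly R} := \poly_(i < N.+1) f i.

Lemma agree_trunc N f : agree N f (trunc N f).
Proof. by move=> i hi; rewrite coef_poly ltnS hi. Qed.

Lemma agree_coef N f g p : agree N f p -> agree N g p ->
  forall i, (i <= N)%N -> f i = g i.
Proof. by move=> hf hg i hi; rewrite hf // hg. Qed.

Lemma agreeW N M f p : (M <= N)%N -> agree N f p -> agree M f p.
Proof. by move=> hMN hf i hi; apply: hf; apply: leq_trans hMN. Qed.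

Lemma agree_fmul N f g p q : agree N f p -> agree N g q ->
  agree N (fmul f g) (p * q).
Proof.
move=> hf hg i hi; rewrite coefM /fmul; apply: eq_bigr => j _.
have hj : (j <= N)%N by apply: leq_trans hi; rewrite -ltnS.
by rewrite hf // hg // (leq_trans (leq_subr _ _) hi).
Qed.

Lemma agreeD N f g p q : agree N f p -> agree N g q -> agree N (f + g) (p + q).
Proof. by move=> hf hg i hi; rewrite coefD -hf // -hg. Qed.

Lemma agreeN N f p : agree N f p -> agree N (- f) (- p).
Proof. by move=> hf i hi; rewrite coefN -hf. Qed.

Lemma agree1 N : agree N (@fone R) 1.
Proof. by move=> i _; rewrite coef1 /fone. Qed.

Lemma fmulA : associative (@fmul R).
Proof.
move=> f g h; apply: fpsP => n.
apply: (@agree_coef n _ _ (trunc n f * (trunc n g * trunc n h))) => //.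
  by apply: agree_fmul; [|apply: agree_fmul]; apply: agree_trunc.
by rewrite mulrA; apply: agree_fmul; [apply: agree_fmul|]; apply: agree_trunc.
Qed.

Lemma fmulC : commutative (@fmul R).
Proof.
move=> f g; apply: fpsP => n.
apply: (@agree_coef n _ _ (trunc n f * trunc n g)) => //.
  by apply: agree_fmul; apply: agree_trunc.
by rewrite mulrC; apply: agree_fmul; apply: agree_trunc.
Qed.

Lemma fmul1 : left_id (@fone R) (@fmul R).
Proof.
move=> f; apply: fpsP => n.
apply: (@agree_coef n _ _ (1 * trunc n f)) => //.
  by apply: agree_fmul; [apply: agree1 | apply: agree_trunc].
by rewrite mul1r; apply: agree_trunc.
Qed.

Lemma fmulDl : left_distributive (@fmul R) fadd.
Proof.
move=> f g h; apply: fpsP => n.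
apply: (@agree_coef n _ _ ((trunc n f + trunc n g) * trunc n h)) => //.
  by apply: agree_fmul; [apply: agreeD | ]; apply: agree_trunc.
by rewrite mulrDl; apply: agreeD; apply: agree_fmul; apply: agree_trunc.
Qed.

Lemma fone_neq0 : (@fone R : ps) != 0.
Proof.
apply/negP => /eqP /(congr1 (fun f : ps => f 0%N)) /eqP.
by rewrite /fone /= oner_eq0.
Qed.

HB.instance Definition _ :=
  GRing.Zmodule_isComNzRing.Build ps fmulA fmulC fmul1 fmulDl fone_neq0.

Lemma coef_fadd f g n : (f + g) n = f n + g n.
Proof. by []. Qed.

Lemma coef_fsub f g n : (f - g) n = f n - g n.
Proof. by []. Qed.

Lemma coef_fone n : (1 : ps) n = (n == 0%N)%:R.
Proof. by []. Qed.

Lemma coef_fmul f g n : (f * g) n = \sum_(i < n.+1) f i * g (n - i)%N.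
Proof. by []. Qed.

Lemma fpowE f m : fpow f m = f ^+ m.
Proof. by elim: m => [|m IH] //=; rewrite exprS -IH. Qed.

Lemma agreeM N f g p q : agree N f p -> agree N g q -> agree N (f * g) (p * q).
Proof. exact: agree_fmul. Qed.

Lemma agreeXn N f p m : agree N f p -> agree N (f ^+ m) (p ^+ m).
Proof.
move=> hf; elim: m => [|m IH]; first by rewrite !expr0; apply: agree1.
by rewrite !exprS; apply: agreeM.
Qed.

Lemma coef_fmul0 f g : (f * g) 0%N = f 0%N * g 0%N.
Proof. by rewrite coef_fmul big_ord1. Qed.

Lemma coef_exprn0 f m : (f ^+ m) 0%N = f 0%N ^+ m.
Proof. by elim: m => [|m IH]; rewrite ?expr0 // !exprS coef_fmul0 IH. Qed.

Lemma coef_fmulrn f m n : (f *+ m) n = f n *+ m.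
Proof. by elim: m => [|m IH]; rewrite ?mulr0n // !mulrS coef_fadd IH. Qed.

Definition fconst (c : R) : ps := fun n => (n == 0%N)%:R * c.
Definition fX : ps := fun n => (n == 1%N)%:R.
Definition fderiv f : ps := fun n => f n.+1 * n.+1%:R.

Lemma agree_const N c : agree N (fconst c) c%:P.
Proof. by move=> i _; rewrite coefC /fconst; case: eqP; rewrite ?mul1r ?mul0r. Qed.

Lemma agree_X N : agree N fX 'X.
Proof. by move=> i _; rewrite coefX. Qed.

Lemma agree_deriv N f p : agree N.+1 f p -> agree N (fderiv f) p^`().
Proof. by move=> hf i hi; rewrite coef_deriv /fderiv hf // mulr_natr. Qed.

Lemma coef_fconstM c f n : (fconst c * f) n = c * f n.
Proof.
rewrite (agreeM (@agree_const n c) (@agree_trunc n f)) // coefCM.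
by rewrite (@agree_trunc n f).
Qed.

Lemma coef_fXM f n : (fX * f) n = if n is n'.+1 then f n' else 0.
Proof.
rewrite (agreeM (@agree_X n) (@agree_trunc n f)) // coefXM.
by case: n => // n; rewrite -(@agree_trunc n.+1 f) // ltnW.
Qed.

Lemma coef_fXnM m f n : (fX ^+ m * f) n = if (n < m)%N then 0 else f (n - m)%N.
Proof.
rewrite (agreeM (agreeXn m (@agree_X n)) (@agree_trunc n f)) // coefXnM.
by case: ltnP => // _; rewrite -(@agree_trunc n f) // leq_subr.
Qed.

Lemma fX_mulI f g : fX * f = fX * g -> f = g.
Proof.
move=> e; apply: fpsP => n.
by have := congr1 (fun u : ps => u n.+1) e; rewrite /= !coef_fXM.
Qed.

Lemma fderivM f g : fderiv (f * g) = fderiv f * g + f * fderiv g.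
Proof.
apply: fpsP => n.
have hf := @agree_trunc n.+1 f; have hg := @agree_trunc n.+1 g.
rewrite (agree_deriv (agreeM hf hg)) // derivM coef_fadd.
rewrite (agreeM (agree_deriv hf) (agreeW (leqnSn n) hg)) //.
by rewrite (agreeM (agreeW (leqnSn n) hf) (agree_deriv hg)) // coefD.
Qed.

Lemma fderivC c : fderiv (fconst c) = 0.
Proof. by apply: fpsP => n; rewrite /fderiv /fconst /= !mul0r. Qed.

Lemma fderivX : fderiv fX = 1.
Proof. by apply: fpsP => -[|n]; rewrite /fderiv /fX /= /fone /= ?mulr1 ?mul0r. Qed.

Lemma fderiv_exprS f m : fderiv (f ^+ m.+1) = (f ^+ m * fderiv f) *+ m.+1.
Proof.
elim: m => [|m IH]; first by rewrite expr1 expr0 mul1r.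
rewrite [f ^+ m.+2]exprS fderivM IH -mulrnAr [in RHS]mulrS.
by rewrite mulrC mulrA -exprS mulrnAr.
Qed.

Lemma fderiv_inj f g : fderiv f = fderiv g -> f 0%N = g 0%N -> f = g.
Proof.
move=> e e0; apply: fpsP => -[|n] //.
have := congr1 (fun u : ps => u n) e; rewrite /fderiv.
by move/(congr1 (fun y => y / n.+1%:R)); rewrite !mulfK ?natS_neq0.
Qed.

Lemma coef_exprn_lt f m i : f 0%N = 0 -> (i < m)%N -> (f ^+ m) i = 0.
Proof.
move=> hf; elim: m i => [|m IH] i // hi.
rewrite exprS coef_fmul big1 // => -[[|j] hj] _ /=; first by rewrite hf mul0r.
by rewrite IH ?mulr0 // ltn_subLR // (leq_trans hi) // addSn ltnS leq_addl.
Qed.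

Lemma coef_poly_exprn_lt p m j : p`_0 = 0 -> (j < m)%N -> (p ^+ m)`_j = 0.
Proof.
move=> hp hj; have hpj : agree j (fun i => p`_i) p by [].
by rewrite -(agreeXn m hpj) // coef_exprn_lt.
Qed.

Lemma agree_comp_trunc N f g q : agree N g q -> g 0%N = 0 ->
  agree N (fcomp f g) (trunc N f \Po q).
Proof.
move=> hg hg0 n hn; rewrite /trunc poly_def linear_sum coef_sum /fcomp.
rewrite (big_ord_widen N.+1 (fun m => f m * fpow g m n)) // big_mkcond /=.
apply: eq_bigr => -[m hm] _ /=.
rewrite comp_polyZ rmorphXn /= comp_polyX coefZ fpowE -(agreeXn m hg) //.
by case: ltnP => // hnm; rewrite coef_exprn_lt ?mulr0.
Qed.

Lemma agree_comp N f g p q : agree N f p -> agree N g q -> g 0%N = 0 ->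
  agree N (fcomp f g) (p \Po q).
Proof.
move=> hf hg hg0 n hn; rewrite (agree_comp_trunc f hg hg0) //.
apply/eqP; rewrite -subr_eq0 -coefB -comp_polyB comp_polyE coef_sum.
rewrite big1 // => i _; rewrite coefZ.
case: (leqP i N) => hi; first by rewrite coefB -hf // -agree_trunc // subrr mul0r.
by rewrite coef_poly_exprn_lt ?mulr0 -?hg // (leq_ltn_trans hn hi).
Qed.

Section Composition.
Variable g : ps.
Hypothesis g0 : g 0%N = 0.

Lemma fcompM f h : fcomp (f * h) g = fcomp f g * fcomp h g.
Proof.
apply: fpsP => n; have hg := @agree_trunc n g.
have hf := @agree_trunc n f; have hh := @agree_trunc n h.
rewrite (agree_comp (agreeM hf hh) hg g0) // comp_polyM.
by rewrite (agreeM (agree_comp hf hg g0) (agree_comp hh hg g0)).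
Qed.

Lemma fcompD f h : fcomp (f + h) g = fcomp f g + fcomp h g.
Proof.
apply: fpsP => n; have hg := @agree_trunc n g.
have hf := @agree_trunc n f; have hh := @agree_trunc n h.
rewrite (agree_comp (agreeD hf hh) hg g0) // comp_polyD.
by rewrite (agreeD (agree_comp hf hg g0) (agree_comp hh hg g0)).
Qed.

Lemma fcompN f : fcomp (- f) g = - fcomp f g.
Proof.
apply: fpsP => n; have hg := @agree_trunc n g; have hf := @agree_trunc n f.
rewrite (agree_comp (agreeN hf) hg g0) // raddfN /=.
by rewrite (agreeN (agree_comp hf hg g0)).
Qed.

Lemma fcomp1 : fcomp 1 g = 1.
Proof.
apply: fpsP => n; have hg := @agree_trunc n g.
by rewrite (agree_comp (@agree1 n) hg g0) // -polyC1 comp_polyC polyC1 coef1.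
Qed.

Lemma fcompX : fcomp fX g = g.
Proof.
apply: fpsP => n; have hg := @agree_trunc n g.
by rewrite (agree_comp (@agree_X n) hg g0) // comp_polyX hg.
Qed.

Lemma coef_fcomp0 f : fcomp f g 0%N = f 0%N.
Proof. by rewrite /fcomp big_ord1 /= mulr1. Qed.

Lemma fderiv_comp f : fderiv (fcomp f g) = fcomp (fderiv f) g * fderiv g.
Proof.
apply: fpsP => n.
have hg := @agree_trunc n.+1 g; have hf := @agree_trunc n.+1 f.
rewrite (agree_deriv (agree_comp hf hg g0)) // deriv_comp.
have hgn := agreeW (leqnSn n) hg.
by rewrite (agreeM (agree_comp (agree_deriv hf) hgn g0) (agree_deriv hg)).
Qed.

Lemma coef_fmul_comp h f n :
  (h * fcomp f g) n = \sum_(m < n.+1) f m * (h * g ^+ m) n.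
Proof.
have hg := @agree_trunc n g.
rewrite (agreeM (@agree_trunc n h) (agree_comp_trunc f hg g0)) //.
rewrite [trunc n f]/trunc poly_def linear_sum /= mulr_sumr coef_sum.
apply: eq_bigr => m _.
rewrite comp_polyZ rmorphXn /= comp_polyX -scalerAr coefZ.
by rewrite -(agreeM (@agree_trunc n h) (agreeXn m hg)).
Qed.

End Composition.

Lemma finvK f : f 0%N = 1 -> Defs.finv f * f = 1.
Proof.
move=> f0; have u0 : (1 - f) 0%N = 0 by rewrite coef_fsub f0 subrr.
have fgeomK : (@fgeom R : ps) * (1 - fX) = 1.
  apply: fpsP => n; rewrite mulrBr mulr1 coef_fsub mulrC coef_fXM /fgeom coef_fone.
  by case: n => [|n]; rewrite ?subr0 ?subrr.
have := congr1 (fun h => fcomp h (1 - f)) fgeomK.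
by rewrite fcompM // fcompD // fcompN // fcomp1 // fcompX // subKr.
Qed.

End PowerSeriesRing.

Section Series.
Variable R : numFieldType.
Local Notation ps := (fps R).

Definition fexpm1 : ps := fX R * fexpm1_over_t R.
Definition fbernoulli : ps := Defs.finv (fexpm1_over_t R).

Lemma fexpm1_0 : fexpm1 0%N = 0.
Proof. by rewrite /fexpm1 coef_fXM. Qed.

Lemma fbernoulliK : fbernoulli * fexpm1_over_t R = 1.
Proof. by apply: finvK; rewrite /fexpm1_over_t /= invr1. Qed.

Lemma fbernoulli0 : fbernoulli 0%N = 1.
Proof.
have := congr1 (fun u : ps => u 0%N) fbernoulliK.
by rewrite /= coef_fmul0 /fexpm1_over_t /= invr1 mulr1.
Qed.

Lemma fbernoulli_expm1 : fbernoulli * fexpm1 = fX R.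
Proof. by rewrite mulrCA fbernoulliK mulr1. Qed.

Lemma fderiv_expm1 : fderiv fexpm1 = 1 + fexpm1.
Proof.
apply: fpsP => n; rewrite /fderiv coef_fadd /fexpm1 !coef_fXM coef_fone /fexpm1_over_t.
rewrite factS natrM invfM mulrAC mulVf ?natS_neq0 // mul1r.
by case: n => [|n] /=; rewrite ?addr0 ?add0r // invr1.
Qed.

Lemma fderiv_log1p : fderiv (flog1p R) * (1 + fX R) = 1.
Proof.
apply: fpsP => n.
rewrite mulrDr mulr1 coef_fadd mulrC coef_fXM coef_fone /fderiv /flog1p /=.
rewrite mulfVK ?natS_neq0 //; case: n => [|n] /=; first by rewrite expr0 addr0.
by rewrite mulfVK ?natS_neq0 // exprS mulN1r addNr.
Qed.

Lemma flog1pE : flog1p R = fX R * fshift (flog1p R).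
Proof. by apply: fpsP => -[|n]; rewrite coef_fXM. Qed.

Lemma flog1p_expm1 : fcomp (flog1p R) fexpm1 = fX R.
Proof.
apply: fderiv_inj; last by rewrite coef_fcomp0 // fexpm1_0.
rewrite fderiv_comp ?fexpm1_0 // fderiv_expm1 fderivX.
have -> : 1 + fexpm1 = fcomp (1 + fX R) fexpm1.
  by rewrite fcompD ?fexpm1_0 // fcomp1 ?fcompX ?fexpm1_0.
by rewrite -fcompM ?fexpm1_0 // fderiv_log1p fcomp1 // fexpm1_0.
Qed.

Lemma fshift_log1p_expm1 : fcomp (fshift (flog1p R)) fexpm1 = fbernoulli.
Proof.
set c := fcomp _ _.
have : fX R * (fexpm1_over_t R * c) = fX R * 1.
  rewrite mulr1 mulrA -/fexpm1 -[X in X * c](fcompX fexpm1_0).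
  by rewrite -fcompM ?fexpm1_0 // -flog1pE flog1p_expm1.
by move/fX_mulI => e1c; rewrite -[c]mul1r -fbernoulliK -mulrA e1c mulr1.
Qed.

Lemma fbase_expm1 : fcomp (fbase R) fexpm1 * (1 + fexpm1) * fbernoulli = 1.
Proof.
have fonepE : fonept R = 1 + fX R.
  by apply: fpsP => -[|[|n]]; rewrite coef_fadd coef_fone /fonept /fX /= ?addr0 ?add0r.
have fbaseK : fbase R * (fonept R * fshift (flog1p R)) = 1.
  by apply: finvK; rewrite /fmul big_ord1 /fshift /fonept /flog1p /= expr0 divr1 mul1r.
have := congr1 (fun h => fcomp h fexpm1) fbaseK; rewrite /= fonepE.
rewrite !fcompM ?fexpm1_0 // fcompD ?fexpm1_0 // !fcomp1 ?fexpm1_0 //.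
by rewrite fcompX ?fexpm1_0 // fshift_log1p_expm1 mulrA.
Qed.

(* Differentiating [fbernoulli * fexpm1 = X]. *)
Lemma fX_fderiv_bernoulli :
  fX R * fderiv fbernoulli = fbernoulli - fbernoulli ^+ 2 * fderiv fexpm1.
Proof.
have e := congr1 (@fderiv R) fbernoulli_expm1; rewrite fderivM fderivX in e.
apply/eqP; rewrite eq_sym subr_eq; apply/eqP.
rewrite -fbernoulli_expm1 -[in LHS](mulr1 fbernoulli) -e; ring.
Qed.

(* The residue of [fexpm1' / fexpm1 ^ (j+1)] is [j == 0]: for [j > 0] the
   series is an exact derivative, as read off [fX_fderiv_bernoulli]. *)
Lemma coef_fbernoulli_exprS_fderiv_expm1 j :
  (fbernoulli ^+ j.+1 * fderiv fexpm1) j = (j == 0%N)%:R.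
Proof.
case: j => [|i].
  rewrite coef_fmul0 coef_exprn0 fbernoulli0 expr1n mul1r.
  by rewrite fderiv_expm1 coef_fadd fexpm1_0 addr0.
have hX : fX R * fderiv (fbernoulli ^+ i.+1)
    = fbernoulli ^+ i.+1 *+ i.+1 - (fbernoulli ^+ i.+2 * fderiv fexpm1) *+ i.+1.
  rewrite fderiv_exprS mulrnAr -mulrnBl; congr (_ *+ _).
  by rewrite mulrCA fX_fderiv_bernoulli mulrBr -exprSr mulrA -exprD addn2.
have := congr1 (fun u : ps => u i.+1) hX.
rewrite /= coef_fXM coef_fsub !coef_fmulrn [fderiv _ i]/fderiv mulr_natr => /eqP.
by rewrite -subr_eq0 opprB addrC subrK mulrn_eq0 /= => /eqP.
Qed.

Lemma coef_lagrange n m : (m <= n)%N ->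
  (fbernoulli ^+ n.+1 * (1 + fexpm1) * fexpm1 ^+ m) n = (n == m)%:R.
Proof.
move=> hmn.
have -> : fbernoulli ^+ n.+1 * (1 + fexpm1) * fexpm1 ^+ m
    = fX R ^+ m * (fbernoulli ^+ (n - m).+1 * fderiv fexpm1).
  rewrite -(subnK hmn) -addSn exprD subnK // fderiv_expm1 -fbernoulli_expm1.
  rewrite (exprMn m fbernoulli fexpm1).
  set a := fbernoulli ^+ _; set b := fbernoulli ^+ m; set c := fexpm1 ^+ m; ring.
rewrite coef_fXnM ltnNge hmn /= coef_fbernoulli_exprS_fderiv_expm1 subn_eq0.
by rewrite eqn_leq hmn andbT.
Qed.

(* Lagrange inversion along [t = e^s - 1]. *)
Lemma coef_fbase n : fbase R n = (fbernoulli ^+ n) n.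
Proof.
have -> : fbernoulli ^+ n
    = fbernoulli ^+ n.+1 * (1 + fexpm1) * fcomp (fbase R) fexpm1.
  rewrite exprS -[LHS]mulr1 -[in LHS]fbase_expm1.
  set a := fbernoulli ^+ n; set b := fcomp _ _; ring.
rewrite coef_fmul_comp ?fexpm1_0 // big_ord_recr /= big1 ?add0r.
  by rewrite coef_lagrange // eqxx mulr1.
move=> [m hm] _ /=; rewrite coef_lagrange ?(ltnW hm) //.
by rewrite eq_sym (ltn_eqF hm) mulr0.
Qed.

Lemma bern_diag a : bern R a a = a`!%:R * fbase R a.
Proof. by rewrite /bern fpowE coef_fbase. Qed.

Lemma fderiv_exp : fderiv (fexp R) = fexp R.
Proof.
apply: fpsP => n; rewrite /fderiv /fexp factS natrM invfM mulrAC.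
by rewrite mulVf ?natS_neq0 // mul1r.
Qed.

Lemma fpow1p_ode (x : R) : (1 + fX R) * fderiv (fpow1p x) = fconst x * fpow1p x.
Proof.
have xL : (fun n => x * flog1p R n) = fconst x * flog1p R.
  by apply: fpsP => n; rewrite coef_fconstM.
have xL0 : (fconst x * flog1p R) 0%N = 0 by rewrite coef_fconstM mulr0.
rewrite /fpow1p xL fderiv_comp // fderiv_exp fderivM fderivC mul0r add0r.
set F := fcomp _ _; set c := fconst x.
have -> : (1 + fX R) * (F * (c * fderiv (flog1p R)))
    = c * F * (fderiv (flog1p R) * (1 + fX R)) by ring.
by rewrite fderiv_log1p mulr1.
Qed.

Lemma coef_fpow1p (x : R) n : fpow1p x n = (\prod_(i < n) (x - i%:R)) / n`!%:R.
Proof.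
have rec m : fpow1p x m.+1 * m.+1%:R = (x - m%:R) * fpow1p x m.
  have := congr1 (fun u : ps => u m) (fpow1p_ode x).
  rewrite /= mulrDl mul1r coef_fadd coef_fXM coef_fconstM.
  case: m => [|m]; first by rewrite addr0 subr0 /fderiv.
  by rewrite [fderiv _ m.+1]/fderiv [fderiv _ m]/fderiv mulrBl => <-; ring.
elim: n => [|n IH].
  by rewrite big_ord0 /fpow1p coef_fcomp0 /fexp /= mul1r.
apply: (mulIf (natS_neq0 R n)); rewrite rec IH big_ord_recr /= factS natrM.
by field; rewrite natr_fact_neq0 addrC natr1 natS_neq0.
Qed.

End Series.

Lemma coef_exprn (R : numFieldType) (f : fps R) r a :
  (f ^+ r) a =
  \sum_(s : {ffun 'I_r -> 'I_a.+1} | (\sum_(i < r) (s i : nat))%N == a)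
    \prod_(i < r) f (s i).
Proof.
rewrite (agreeXn r (@agree_trunc _ a f)) // /trunc poly_def.
rewrite -[r in _ ^+ r](card_ord r) -prodr_const bigA_distr_bigA /= coef_sum.
rewrite [RHS]big_mkcond /=; apply: eq_bigr => s _.
rewrite (eq_bigr (fun i => (f (s i))%:P * 'X^(s i))); last first.
  by move=> i _; rewrite mul_polyC.
rewrite big_split /= -rmorph_prod prodrXr coefCM coefXn eq_sym.
by case: eqP; rewrite ?mulr1 ?mulr0.
Qed.

Lemma falling_factorial_S1 (R : comNzRingType) (x : R) n :
  \prod_(i < n) (x - i%:R) = \sum_(j < n.+1) (S1 n j)%:~R * x ^+ j.
Proof.
set P : {poly R} := \prod_(i < n) ('X - (i%:R)%:P).
have mapP : map_poly intr (\prod_(i < n) ('X - (i%:R)%:P) : {poly int}) = P.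
  rewrite rmorph_prod /=; apply: eq_bigr => i _.
  by rewrite map_polyXsubC /= rmorph_nat.
have -> : \prod_(i < n) (x - i%:R) = P.[x].
  by rewrite horner_prod; apply: eq_bigr => i _; rewrite hornerXsubC.
rewrite (@horner_coef_wide _ n.+1).
  by apply: eq_bigr => j _; rewrite -mapP coef_map.
by rewrite /P size_prod_XsubC [index_enum _]unlock -enumT size_enum_ord.
Qed.

Lemma big_triangle_shift (V : nmodType) n (G : nat -> nat -> V) :
  \sum_(j < n.+1) \sum_(l < (n - j).+1) G j (l + j)%N
  = \sum_(m < n.+1) \sum_(j < m.+1) G j m.
Proof.
transitivity (\sum_(j < n.+1) \sum_(m < n.+1) (if (j <= m)%N then G j m else 0)).
  apply: eq_bigr => -[j hj] _ /=.
  rewrite -(big_mkord xpredT (fun l => G j (l + j)%N)) -subSn //.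
  rewrite -{1}(add0n j) -(big_addn 0 n.+1 j xpredT) big_geq_mkord big_mkcond /=.
  by apply: eq_bigr.
rewrite exchange_big /=; apply: eq_bigr => -[m hm] _ /=.
rewrite (big_ord_widen n.+1 (fun j => G j m) hm) [RHS]big_mkcond /=.
by apply: eq_bigr => j _; rewrite ltnS.
Qed.

Section Corollary4.
Variables (R : numFieldType) (n r : nat) (k : int) (x : R).

Lemma tA_expansion : tA n r k x =
  \sum_(m < n.+1) \sum_(j < m.+1) \sum_(a < (n - m).+1)
    n`!%:R / m`!%:R * (S1 m j)%:~R * fLifmlog R k (n - m - a)%N
    * (fbase R ^+ r) a * x ^+ j.
Proof.
rewrite /tA fpowE [fmul _ (fpow1p x)]fmulC [in LHS]/fmul mulr_sumr.
apply: eq_bigr => m _; rewrite coef_fpow1p falling_factorial_S1.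
rewrite !mulr_suml mulr_sumr; apply: eq_bigr => j _.
rewrite mulr_sumr mulr_sumr; apply: eq_bigr => a _; ring.
Qed.

Lemma summand_fbase m j a (s : 'I_r -> nat) : (m <= n)%N -> (a <= n - m)%N ->
  'C(n, m)%:R * 'C(n - m, a)%:R * multinom R a s * (S1 m j)%:~R
    * (\prod_(i < r) bern R (s i) (s i)) * tC R k (n - m - a)
  = n`!%:R / m`!%:R * (S1 m j)%:~R * fLifmlog R k (n - m - a)%N
    * \prod_(i < r) fbase R (s i).
Proof.
move=> hm ha.
have binm : (n`!%:R : R) = 'C(n, m)%:R * (m`!%:R * (n - m)`!%:R).
  by rewrite -!natrM bin_fact.
have bina : ((n - m)`!%:R : R) = 'C(n - m, a)%:R * (a`!%:R * (n - m - a)`!%:R).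
  by rewrite -!natrM bin_fact.
rewrite /multinom /tC (eq_bigr _ (fun i _ => bern_diag R (s i))) big_split /=.
rewrite binm bina; field.
by rewrite natr_fact_neq0; apply/prodf_neq0 => i _; apply: natr_fact_neq0.
Qed.

End Corollary4.

Theorem corollary4 (R : numFieldType) (n r : nat) (k : int) (x : R) :
  (0 < r)%N ->
  tA n r k x =
  \sum_(j < n.+1)
    (\sum_(l < (n - j).+1) \sum_(a < (n - j - l).+1)
       \sum_(s : {ffun 'I_r -> 'I_a.+1} | (\sum_(i < r) (s i : nat))%N == a)
         'C(n, l + j)%:R * 'C(n - j - l, a)%:R
         * multinom R a (fun i => (s i : nat))
         * (S1 (l + j) j)%:~R
         * (\prod_(i < r) bern R (s i) (s i))
         * tC R k (n - j - l - a)) * x ^+ j.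
Proof.
(* The identity also holds for [r = 0]. *)
move=> _; rewrite tA_expansion.
pose G j m := \sum_(a < (n - m).+1) n`!%:R / m`!%:R * (S1 m j)%:~R
  * fLifmlog R k (n - m - a)%N * (fbase R ^+ r) a * x ^+ j.
rewrite -(big_triangle_shift n G).
apply: eq_bigr => -[j hj] _ /=; rewrite mulr_suml.
apply: eq_bigr => -[l hl] _ /=.
have hjl : (j + l <= n)%N by lia.
rewrite -subnDA addnC /G mulr_suml; apply: eq_bigr => -[a ha] _ /=.
rewrite coef_exprn mulr_sumr !mulr_suml; apply: eq_bigr => s _.
by rewrite summand_fbase //; ring.
Qed.
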